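(* Suppose $\|x_s\|_2\le L$ for all arms ever played and $\lambda>0$. Then at every communication round at time $t\le T$, for every client $i$ and every participant set $S$, the data incentive satisfies $$\mathcal I^d_{i,t}(S)\le \min\Big\{\big(1+\tfrac{L^2}{\lambda}\big)^{T},\ \big(1+\tfrac{TL^2}{\lambda d}\big)^{d}\Big\}.$$ Consequently, under the payment-free incentive mechanism, a client $i$ with $D_i^p>\min\{(1+L^2/\lambda)^T,(1+TL^2/(\lambda d))^d\}$ never participates in data sharing.
   Context: Federated linear bandit with $N$ clients and a server; at each time $t\le T$ one client plays an arm $x_t\in\mathbb R^d$ with $\|x_t\|_2\le L$. Client $i$ holds $V_{i,t}=\lambda I+\sum x_sx_s^\top$ over the data available to it; $\Delta V_{j,t}$ denotes client $j$'s local data (sum of $x_sx_s^\top$) not yet uploaded to the server, and $\Delta V_{-i,t}$ the data held by the server (uploaded by other clients) not yet sent to client $i$; all these sums are over distinct time steps $s\le t$, disjoint from those in $V_{i,t}$. For a participant set $S$, the data incentive is $\mathcal I^d_{i,t}(S)=\frac{\det(D_{i,t}(S)+V_{i,t})}{\det V_{i,t}}-1$ with $D_{i,t}(S)=\sum_{j\in S,\,j\ne i}\Delta V_{j,t}+\Delta V_{-i,t}$. Client $i$ participates only if its incentive is at least its data-sharing cost $D_i^p$. The payment-free mechanism offers only the data incentive: starting from all clients it repeatedly removes any client $i\in S$ with $\mathcal I^d_{i,t}(S)<D_i^p$ until stable. *)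

From HB Require Import structures.
From mathcomp Require Import all_boot all_order all_algebra.
Set Implicit Arguments. Unset Strict Implicit. Unset Printing Implicit Defensive.
Import Order.TTheory GRing.Theory Num.Theory.
Local Open Scope ring_scope.

Section FedBandit.
Variables (R : rcfType) (d T N : nat).

Definition norm2 (v : 'cV[R]_d) : R := Num.sqrt (\sum_(k < d) v k 0 ^+ 2).

(* Time steps 1..T are indexed by s : 'I_T (s stands for time s+1);
   x s is the arm played at that time step. *)
Definition gram (x : 'I_T -> 'cV[R]_d) (A : {set 'I_T}) : 'M[R]_d :=
  \sum_(s in A) (x s *m (x s)^T).

Definition Vmat (x : 'I_T -> 'cV[R]_d) (lam : R)
  (avail : 'I_N -> nat -> {set 'I_T}) (i : 'I_N) (t : nat) : 'M[R]_d :=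
  lam%:M + gram x (avail i t).

(* D_{i,t}(S) = sum_{j in S, j <> i} DeltaV_{j,t} + DeltaV_{-i,t} *)
Definition Dmat (x : 'I_T -> 'cV[R]_d)
  (local server : 'I_N -> nat -> {set 'I_T})
  (i : 'I_N) (t : nat) (S : {set 'I_N}) : 'M[R]_d :=
  \sum_(j in S | j != i) gram x (local j t) + gram x (server i t).

Definition data_incentive (x : 'I_T -> 'cV[R]_d) (lam : R)
  (avail local server : 'I_N -> nat -> {set 'I_T})
  (i : 'I_N) (t : nat) (S : {set 'I_N}) : R :=
  \det (Dmat x local server i t S + Vmat x lam avail i t)
    / \det (Vmat x lam avail i t) - 1.

(* Standing assumptions on the data bookkeeping at time t:
   all sums range over time steps s <= t (i.e. s+1 <= t), the sets of time
   steps in DeltaV_{j,t} (j <> i), DeltaV_{-i,t} and V_{i,t} are pairwise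
   disjoint. *)
Definition data_wf (avail local server : 'I_N -> nat -> {set 'I_T})
  (t : nat) : Prop :=
  forall i : 'I_N,
  [/\ (forall s : 'I_T, s \in avail i t -> (s < t)%N),
      (forall s : 'I_T, s \in server i t -> (s < t)%N)
    & (forall (j : 'I_N) (s : 'I_T), s \in local j t -> (s < t)%N) ] /\
  [/\ [disjoint avail i t & server i t],
      (forall j : 'I_N, j != i ->
         [disjoint avail i t & local j t] /\ [disjoint server i t & local j t])
    & (forall j k : 'I_N, j != i -> k != i -> j != k ->
         [disjoint local j t & local k t])].

End FedBandit.

(* Payment-free mechanism: starting from all clients, repeatedly remove any
   client i in S with incentive inc i S < cost i, until stable. *)
Inductive pf_reach (R : rcfType) (N : nat)
  (inc : 'I_N -> {set 'I_N} -> R) (cost : 'I_N -> R) : {set 'I_N} -> Prop :=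
| pf_start : pf_reach inc cost [set: 'I_N]
| pf_remove (S : {set 'I_N}) (i : 'I_N) :
    pf_reach inc cost S -> i \in S -> inc i S < cost i ->
    pf_reach inc cost (S :\ i).

Definition pf_stable (R : rcfType) (N : nat)
  (inc : 'I_N -> {set 'I_N} -> R) (cost : 'I_N -> R) (S : {set 'I_N}) : Prop :=
  forall i, i \in S -> ~ (inc i S < cost i).

Definition pf_outcome (R : rcfType) (N : nat)
  (inc : 'I_N -> {set 'I_N} -> R) (cost : 'I_N -> R) (S : {set 'I_N}) : Prop :=
  pf_reach inc cost S /\ pf_stable inc cost S.

From HB Require Import structures.
From mathcomp Require Import all_boot all_order all_algebra.
From mathcomp Require Import ring lra.
Import Order.TTheory GRing.Theory Num.Theory.
Set Implicit Arguments. Unset Strict Implicit. Unset Printing Implicit Defensive.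
Local Open Scope ring_scope.

(** The data incentive of client i is det(D + V) / det V - 1, where V is the
    regularized Gram matrix lam I + sum x_s x_s^T of the data i already holds
    and D is the Gram matrix of the new data it would receive.  Since these two
    data sets are disjoint, D + V is again a regularized Gram matrix, of the
    union, so the incentive is bounded by two classical log-det estimates:
    - matrix determinant lemma: adding one sample x multiplies the determinant
      by 1 + x^T V^-1 x <= 1 + |x|^2 / lam, giving (1 + L^2/lam)^T;
    - Hadamard + AM-GM: det V <= prod V_kk <= (tr V / d)^d with
      tr V <= d lam + T L^2, while det V >= lam^d, giving (1 + T L^2/(lam d))^d. *)

Section InnerProduct.
Variables (R : realFieldType) (n : nat).
Implicit Types u w : 'cV[R]_n.

Definition dot u w : R := \sum_i u i 0 * w i 0.

Lemma tr_mul_dot u w : (u^T *m w) 0 0 = dot u w.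
Proof. by rewrite mxE; apply: eq_bigr => i _; rewrite mxE. Qed.

Lemma dotC u w : dot u w = dot w u.
Proof. by apply: eq_bigr => i _; rewrite mulrC. Qed.

Lemma dot_ge0 u : 0 <= dot u u.
Proof. by apply: sumr_ge0 => i _; rewrite -expr2 sqr_ge0. Qed.

Lemma dot_sqr u : dot u u = \sum_i u i 0 ^+ 2.
Proof. by apply: eq_bigr => i _; rewrite expr2. Qed.

Lemma dot0r u : dot u 0 = 0.
Proof. by rewrite /dot big1 // => i _; rewrite mxE mulr0. Qed.

Lemma dot0l u : dot 0 u = 0.
Proof. by rewrite dotC dot0r. Qed.

Lemma dot_subZ u w k :
  dot (u - k *: w) (u - k *: w) = dot u u - 2 * k * dot u w + k ^+ 2 * dot w w.
Proof.
rewrite /dot !mulr_sumr -sumrN -!big_split /=; apply: eq_bigr => i _.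
rewrite !mxE; ring.
Qed.

End InnerProduct.

Lemma dot1 (R : realFieldType) (u w : 'cV[R]_1) : dot u w = u 0 0 * w 0 0.
Proof. exact: big_ord1. Qed.

Lemma dot_col_mx (R : realFieldType) n1 n2 (a b : 'cV[R]_n1) (c e : 'cV[R]_n2) :
  dot (col_mx a c) (col_mx b e) = dot a b + dot c e.
Proof.
rewrite /dot big_split_ord /=; congr (_ + _); apply: eq_bigr => i _.
  by rewrite !col_mxEu.
by rewrite !col_mxEd.
Qed.

Definition coercive (R : realFieldType) n (lam : R) (M : 'M[R]_n) : Prop :=
  M^T = M /\ forall y : 'cV_n, lam * dot y y <= dot y (M *m y).

Lemma det_1_rank1 (R : comUnitRingType) n (a : 'cV[R]_n) (b : 'rV[R]_n) :
  \det (1%:M + a *m b) = 1 + (b *m a) 0 0.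
Proof.
pose X := block_mx (1%:M : 'M[R]_n) a (- b) (1%:M : 'M[R]_1).
have lowerE : X = block_mx 1%:M 0 (- b) 1%:M *m block_mx 1%:M a 0 (1%:M + b *m a).
  rewrite mulmx_block ?mulmx1 ?mul1mx ?mulmx0 ?mul0mx ?addr0 ?add0r.
  by rewrite mulNmx addrCA addNr addr0.
have upperE : X = block_mx (1%:M + a *m b) a 0 1%:M *m block_mx 1%:M 0 (- b) 1%:M.
  rewrite mulmx_block ?mulmx1 ?mul1mx ?mulmx0 ?mul0mx ?addr0 ?add0r.
  by rewrite mulmxN addrK.
have := congr1 determinant upperE; rewrite lowerE !det_mulmx.
rewrite !det_lblock !det_ublock !det1 !mul1r !mulr1 => <-.
by rewrite det_mx11 !mxE.
Qed.

Lemma det_add_rank1 (R : comUnitRingType) n (M : 'M[R]_n) (u : 'cV[R]_n) :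
  M \in unitmx -> \det (M + u *m u^T) = \det M * (1 + (u^T *m invmx M *m u) 0 0).
Proof.
move=> M_unit.
have -> : M + u *m u^T = M *m (1%:M + (invmx M *m u) *m u^T).
  by rewrite mulmxDr mulmx1 !mulmxA mulmxV // mul1mx.
by rewrite det_mulmx det_1_rank1 mulmxA.
Qed.

Lemma coercive_inv_quad (R : realFieldType) n (lam : R) (M : 'M[R]_n) (u : 'cV[R]_n) :
  0 < lam -> coercive lam M -> M \in unitmx ->
  0 <= (u^T *m invmx M *m u) 0 0 /\ lam * (u^T *m invmx M *m u) 0 0 <= dot u u.
Proof.
move=> lam_gt0 [_ M_coer] M_unit.
set y := invmx M *m u.
have My : M *m y = u by rewrite /y mulmxA mulmxV // mul1mx.
have -> : (u^T *m invmx M *m u) 0 0 = dot u y by rewrite -mulmxA tr_mul_dot.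
have coer_y := M_coer y; rewrite My dotC in coer_y.
have sq_ge0 := dot_ge0 (u - lam *: y); rewrite dot_subZ in sq_ge0.
have y_ge0 := dot_ge0 y.
by split; nra.
Qed.

Section SchurComplement.
Variables (R : realFieldType) (n : nat) (lam : R) (N : 'M[R]_(1 + n)).
Hypotheses (lam_gt0 : 0 < lam) (N_coercive : coercive lam N).

Let a := ulsubmx N.
Let b := ursubmx N.
Let c := dlsubmx N.
Let C := drsubmx N.

Let N_block : N = block_mx a b c C. Proof. by rewrite submxK. Qed.

Lemma coercive_drsubmx : coercive lam C.
Proof.
have [N_sym N_coer] := N_coercive.
split; first by rewrite /C trmx_drsub N_sym.
move=> y; have := N_coer (col_mx 0 y).
rewrite N_block mul_block_col !mulmx0 !add0r !dot_col_mx (@dot0r _ 1%N) (@dot0l _ 1%N).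
by rewrite !add0r.
Qed.

Hypothesis C_unit : C \in unitmx.

Let w := invmx C *m c.
Definition schur_entry := (a - b *m w) 0 0.

Lemma det_schur : \det N = schur_entry * \det C.
Proof.
have N_factor : N = block_mx 1%:M (b *m invmx C) 0 1%:M *m block_mx (a - b *m w) 0 c C.
  rewrite mulmx_block ?mulmx1 ?mul1mx ?mulmx0 ?mul0mx ?addr0 ?add0r.
  by rewrite N_block /w mulmxA subrK -mulmxA mulVmx // mulmx1.
by rewrite N_factor det_mulmx det_ublock det_lblock !det1 !mul1r det_mx11.
Qed.

(** The Schur complement is at least lam (coercivity along (1, -C^-1 c)) and
    at most a, as b C^-1 c = w^T C w >= 0 with w = C^-1 c. *)
Lemma schur_entry_bounds : lam <= schur_entry <= a 0 0.
Proof.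
have [N_sym N_coer] := N_coercive.
have cE : c = C *m w by rewrite /w mulmxA mulmxV // mul1mx.
apply/andP; split.
  pose z : 'cV_(1 + n) := col_mx (1%:M : 'M_1) (- w).
  have Nz : N *m z = col_mx (a - b *m w) 0.
    by rewrite N_block mul_block_col !mulmx1 !mulmxN {1}cE subrr.
  have := N_coer z; rewrite Nz /z !dot_col_mx dot0r addr0 !dot1.
  rewrite [1%:M 0 0]mxE eqxx mulr1n !mul1r => coer_z.
  apply: le_trans coer_z; rewrite mulrDr mulr1 lerDl.
  by apply: mulr_ge0; [exact: ltW | exact: dot_ge0].
have bE : b = c^T by rewrite /b /c trmx_dlsub N_sym.
have quad_ge0 : 0 <= (b *m w) 0 0.
  rewrite bE tr_mul_dot {1}cE dotC.
  apply: le_trans (proj2 coercive_drsubmx w).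
  by apply: mulr_ge0; [exact: ltW | exact: dot_ge0].
have -> : schur_entry = a 0 0 - (b *m w) 0 0 by rewrite /schur_entry !mxE.
by rewrite lerBlDr lerDl.
Qed.

End SchurComplement.

(** lam^n <= det M <= prod_i M_ii for lam-coercive M (the upper bound is
    Hadamard's inequality); induction on n through Schur complements. *)
Lemma coercive_det_bounds (R : realFieldType) n (lam : R) (M : 'M[R]_n) :
  0 < lam -> coercive lam M -> lam ^+ n <= \det M /\ \det M <= \prod_i M i i.
Proof.
move=> lam_gt0; elim: n M => [|n IH] M M_coer.
  by rewrite det_mx00 big_ord0 expr0.
have [C_lb C_ub] := IH _ (coercive_drsubmx M_coer).
have C_unit : drsubmx (M : 'M_(1 + n)) \in unitmx.
  by rewrite unitmxE unitfE lt0r_neq0 // (lt_le_trans (exprn_gt0 _ lam_gt0) C_lb).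
have /andP [s_lb s_ub] := schur_entry_bounds lam_gt0 M_coer C_unit.
have lam_pow_ge0 : 0 <= lam ^+ n by apply: exprn_ge0; exact: ltW.
rewrite (det_schur C_unit) exprS; split.
  by apply: ler_pM => //; exact: ltW.
rewrite big_ord_recl; apply: ler_pM.
- exact: le_trans (ltW lam_gt0) s_lb.
- exact: le_trans C_lb.
- suff <- : ulsubmx (M : 'M_(1 + n)) 0 0 = M ord0 ord0 by [].
  by rewrite !mxE; congr (M _ _); apply: val_inj.
- suff <- : \prod_i drsubmx (M : 'M_(1 + n)) i i = \prod_i M (lift ord0 i) (lift ord0 i) by [].
  by apply: eq_bigr => i _; rewrite !mxE; congr (M _ _); apply: val_inj.
Qed.

Section RegularizedGram.
Variables (R : realFieldType) (n T : nat) (lam : R) (v : 'I_T -> 'cV[R]_n).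
Hypothesis lam_gt0 : 0 < lam.
Implicit Types A C : {set 'I_T}.

Definition reg_gram (A : {set 'I_T}) : 'M[R]_n :=
  lam%:M + \sum_(s in A) v s *m (v s)^T.

(** y^T (lam I + sum v v^T) y = lam |y|^2 + sum (v.y)^2. *)
Lemma reg_gram_coercive A : coercive lam (reg_gram A).
Proof.
split.
  rewrite /reg_gram raddfD /= tr_scalar_mx linear_sum /=; congr (_ + _).
  by apply: eq_bigr => s _; rewrite trmx_mul trmxK.
move=> y; rewrite -[dot y (_ *m y)]tr_mul_dot /reg_gram mulmxDl mul_scalar_mx mulmxDr.
rewrite -scalemxAr mulmx_suml mulmx_sumr mxE summxE mxE tr_mul_dot lerDl.
apply: sumr_ge0 => s _.
rewrite -mulmxA mulmxA mxE big_ord1 !tr_mul_dot [dot y _]dotC -expr2.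
exact: sqr_ge0.
Qed.

Lemma reg_gram_det_bounds A :
  lam ^+ n <= \det (reg_gram A) /\ \det (reg_gram A) <= \prod_i reg_gram A i i.
Proof. exact: coercive_det_bounds lam_gt0 (reg_gram_coercive A). Qed.

Lemma reg_gram_det_gt0 A : 0 < \det (reg_gram A).
Proof.
exact: lt_le_trans (exprn_gt0 _ lam_gt0) (proj1 (reg_gram_det_bounds A)).
Qed.

Lemma reg_gram_unit A : reg_gram A \in unitmx.
Proof. by rewrite unitmxE unitfE lt0r_neq0 // reg_gram_det_gt0. Qed.

Lemma reg_gram_setU1 (a : 'I_T) (A : {set 'I_T}) :
  a \notin A -> reg_gram (a |: A) = reg_gram A + v a *m (v a)^T.
Proof. by move=> aA; rewrite /reg_gram big_setU1 //= addrCA addrC. Qed.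

Lemma reg_gram_diag A i : reg_gram A i i = lam + \sum_(s in A) v s i 0 ^+ 2.
Proof.
rewrite /reg_gram !mxE eqxx mulr1n summxE; congr (_ + _).
by apply: eq_bigr => s _; rewrite !mxE big_ord1 !mxE expr2.
Qed.

Variable K : R.
Hypotheses (K_ge0 : 0 <= K) (v_bound : forall s, dot (v s) (v s) <= K).

Lemma reg_gram_det_setU1 (a : 'I_T) (A : {set 'I_T}) :
  a \notin A -> \det (reg_gram (a |: A)) <= \det (reg_gram A) * (1 + K / lam).
Proof.
move=> aA; rewrite reg_gram_setU1 // det_add_rank1 ?reg_gram_unit //.
have [_ quad_le] := coercive_inv_quad (v a) lam_gt0 (reg_gram_coercive A) (reg_gram_unit A).
apply: ler_wpM2l; first exact: ltW (reg_gram_det_gt0 A).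
by rewrite lerD2l ler_pdivlMr // mulrC (le_trans quad_le).
Qed.

Lemma reg_gram_det_setU (A C : {set 'I_T}) : [disjoint A & C] ->
  \det (reg_gram (A :|: C)) <= \det (reg_gram A) * (1 + K / lam) ^+ #|C|.
Proof.
have rate_ge0 : 0 <= 1 + K / lam by rewrite addr_ge0 // divr_ge0 // ltW.
elim: {C}_.+1 {-2}C (ltnSn #|C|) => // k IH C C_lt disj_AC.
have [C0 | [a aC]] := set_0Vmem C.
  by rewrite C0 setU0 cards0 expr0 mulr1.
have aN : a \notin A :|: C :\ a.
  by rewrite !inE eqxx negb_or (disjointFl disj_AC aC).
have -> : A :|: C = a |: (A :|: C :\ a) by rewrite setUCA setD1K.
rewrite (cardsD1 a C) aC exprS mulrCA.
apply: le_trans (reg_gram_det_setU1 aN) _; rewrite mulrC ler_wpM2l //.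
apply: IH; first by rewrite -ltnS (leq_trans _ C_lt) // (cardsD1 a C) aC.
exact: disjointWr (subD1set C a) disj_AC.
Qed.

Lemma reg_gram_trace_le A : \sum_i reg_gram A i i <= n%:R * lam + T%:R * K.
Proof.
under eq_bigr => i _ do rewrite reg_gram_diag.
rewrite big_split /= sumr_const card_ord mulr_natl lerD2l exchange_big /=.
apply: le_trans (_ : \sum_(s in A) K <= _).
  by apply: ler_sum => s _; rewrite -dot_sqr.
rewrite sumr_const -[K *+ _]mulr_natl ler_wpM2r // ler_nat.
by apply: leq_trans (max_card _) _; rewrite card_ord.
Qed.

(** Hadamard's inequality followed by AM-GM on the diagonal. *)
Lemma reg_gram_det_le_AGM A :
  \det (reg_gram A) <= lam ^+ n * (1 + T%:R * K / (lam * n%:R)) ^+ n.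
Proof.
apply: le_trans (proj2 (reg_gram_det_bounds A)) _.
have diag_ge0 : {in predT, forall i, 0 <= reg_gram A i i}.
  move=> i _; rewrite reg_gram_diag addr_ge0 ?(ltW lam_gt0) //.
  by apply: sumr_ge0 => s _; exact: sqr_ge0.
have [AGM _] := leif_AGM diag_ge0.
apply: le_trans AGM _; rewrite card_ord.
have tr_ge0 : 0 <= \sum_i reg_gram A i i by apply: sumr_ge0 => i _; exact: diag_ge0.
move: (\sum_i _) tr_ge0 (reg_gram_trace_le A) => tr tr_ge0 tr_le.
have [-> | n_gt0] := posnP n; first by rewrite !expr0 mulr1.
have n_pos : 0 < n%:R :> R by rewrite ltr0n.
rewrite -exprMn; apply: lerXn2r.
- by rewrite nnegrE divr_ge0 // ltW.
- by rewrite nnegrE mulr_ge0 ?(ltW lam_gt0) // addr_ge0 // divr_ge0 ?mulr_ge0 ?(ltW lam_gt0).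
rewrite ler_pdivrMr //.
suff -> : lam * (1 + T%:R * K / (lam * n%:R)) * n%:R = n%:R * lam + T%:R * K by [].
by field; rewrite !lt0r_neq0.
Qed.

(** Both growth bounds for the ratio of determinants: the first from
    reg_gram_det_setU with |C| <= T, the second from the AM-GM upper bound on
    the numerator and det >= lam^n for the denominator. *)
Lemma reg_gram_det_ratio_le A C : [disjoint A & C] ->
  \det (reg_gram (A :|: C)) / \det (reg_gram A)
    <= Num.min ((1 + K / lam) ^+ T) ((1 + T%:R * K / (lam * n%:R)) ^+ n).
Proof.
move=> disj_AC; have det_gt0 := reg_gram_det_gt0 A.
rewrite le_min !ler_pdivrMr // ![_ * \det _]mulrC; apply/andP; split.
  apply: le_trans (reg_gram_det_setU disj_AC) _; apply: ler_wpM2l; first exact: ltW.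
  apply: ler_weXn2l; first by rewrite lerDl divr_ge0 // ltW.
  by apply: leq_trans (max_card _) _; rewrite card_ord.
apply: le_trans (reg_gram_det_le_AGM _) _; rewrite ler_wpM2r //.
  by rewrite exprn_ge0 // addr_ge0 // !divr_ge0 ?mulr_ge0 ?(ltW lam_gt0).
exact: proj1 (reg_gram_det_bounds A).
Qed.

End RegularizedGram.

Lemma norm2_le_sqr (R : rcfType) d (v : 'cV[R]_d) (L : R) :
  norm2 v <= L -> dot v v <= L ^+ 2.
Proof.
move=> vL; have sum_ge0 : 0 <= dot v v by exact: dot_ge0.
rewrite -(sqr_sqrtr sum_ge0) !expr2.
by apply: ler_pM; rewrite ?sqrtr_ge0 // dot_sqr.
Qed.

(** The federated bookkeeping: the data client i would receive from the
    participants S at time t is the server's backlog for i together with the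
    un-uploaded local data of the other participants. *)
Section DataIncentive.
Variables (R : rcfType) (d T N : nat) (x : 'I_T -> 'cV[R]_d) (lam : R).
Variables (avail local server : 'I_N -> nat -> {set 'I_T}).

Definition peer_data (i : 'I_N) (t : nat) (S : {set 'I_N}) (j : 'I_N) : {set 'I_T} :=
  if (j \in S) && (j != i) then local j t else set0.

Definition shared_data (i : 'I_N) (t : nat) (S : {set 'I_N}) : {set 'I_T} :=
  server i t :|: \bigcup_j peer_data i t S j.

Lemma gram_setU (A B : {set 'I_T}) :
  [disjoint A & B] -> gram x (A :|: B) = gram x A + gram x B.
Proof.
by move=> disj_AB; rewrite /gram -bigU //; apply: eq_bigl => s; rewrite !inE.
Qed.

Section AtTime.
Variables (t : nat) (i : 'I_N) (S : {set 'I_N}).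
Hypothesis wf : data_wf avail local server t.

Lemma peer_data_disjoint j k : j != k -> [disjoint peer_data i t S j & peer_data i t S k].
Proof.
have [_ [_ _ disj_local]] := wf i.
move=> jk; rewrite /peer_data.
case: ifP => [/andP [_ ji] | _]; last by rewrite -setI_eq0 set0I.
case: ifP => [/andP [_ ki] | _]; last by rewrite -setI_eq0 setI0.
exact: disj_local.
Qed.

Lemma Dmat_gram : Dmat x local server i t S = gram x (shared_data i t S).
Proof.
have [_ [_ disj_other _]] := wf i.
rewrite /shared_data gram_setU; last first.
  apply: bigcup_disjoint => j _; rewrite /peer_data.
  case: ifP => [/andP [_ ji] | _]; last by rewrite -setI_eq0 setI0.
  exact: (proj2 (disj_other j ji)).
rewrite addrC /Dmat /gram partition_disjoint_bigcup; last exact: peer_data_disjoint.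
rewrite [in LHS]big_mkcond /=; congr (_ + _); apply: eq_bigr => j _.
by rewrite /peer_data; case: ifP => // _; rewrite big_set0.
Qed.

Lemma avail_shared_disjoint : [disjoint avail i t & shared_data i t S].
Proof.
have [_ [disj_server disj_other _]] := wf i.
rewrite -setI_eq0 setIUr (disjoint_setI0 disj_server) set0U setI_eq0.
apply: bigcup_disjoint => j _; rewrite /peer_data.
case: ifP => [/andP [_ ji] | _]; last by rewrite -setI_eq0 setI0.
exact: (proj1 (disj_other j ji)).
Qed.

Lemma data_incentive_ratio :
  data_incentive x lam avail local server i t S
  = \det (reg_gram lam x (avail i t :|: shared_data i t S))
      / \det (reg_gram lam x (avail i t)) - 1.
Proof.
have reg_gramE A : reg_gram lam x A = lam%:M + gram x A by [].
rewrite /data_incentive Dmat_gram /Vmat !reg_gramE gram_setU ?avail_shared_disjoint //.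
by congr (\det _ / _ - 1); rewrite addrC -addrA.
Qed.

Variable L : R.
Hypotheses (x_le : forall s, norm2 (x s) <= L) (lam_gt0 : 0 < lam).

Lemma data_incentive_le :
  data_incentive x lam avail local server i t S
  <= Num.min ((1 + L ^+ 2 / lam) ^+ T) ((1 + T%:R * L ^+ 2 / (lam * d%:R)) ^+ d).
Proof.
have x_bound s : dot (x s) (x s) <= L ^+ 2 by exact: norm2_le_sqr.
rewrite data_incentive_ratio lerBlDr.
apply: le_trans (reg_gram_det_ratio_le lam_gt0 (sqr_ge0 L) x_bound avail_shared_disjoint) _.
by rewrite lerDl.
Qed.

End AtTime.
End DataIncentive.

Lemma pf_outcome_excludes (R : rcfType) N (inc : 'I_N -> {set 'I_N} -> R)
    (cost : 'I_N -> R) (b : R) (i : 'I_N) (S : {set 'I_N}) :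
  (forall S', inc i S' <= b) -> b < cost i -> pf_outcome inc cost S -> i \notin S.
Proof.
move=> inc_le cost_gt [_ stable]; apply/negP => iS.
exact: stable i iS (le_lt_trans (inc_le S) cost_gt).
Qed.

Theorem mainTheorem2 (R : rcfType) (d T N : nat)
  (x : 'I_T -> 'cV[R]_d) (L lam : R)
  (avail local server : 'I_N -> nat -> {set 'I_T}) :
  (forall s : 'I_T, norm2 (x s) <= L) ->
  0 < lam ->
  (forall t : nat, (t <= T)%N -> data_wf avail local server t) ->
  let bound := Num.min ((1 + L ^+ 2 / lam) ^+ T)
                       ((1 + T%:R * L ^+ 2 / (lam * d%:R)) ^+ d) in
  (forall (t : nat), (t <= T)%N -> forall (i : 'I_N) (S : {set 'I_N}),
     data_incentive x lam avail local server i t S <= bound)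
  /\
  (forall (t : nat), (t <= T)%N -> forall (cost : 'I_N -> R) (i : 'I_N),
     bound < cost i ->
     forall S : {set 'I_N},
       pf_outcome (fun j S' => data_incentive x lam avail local server j t S')
                  cost S ->
       i \notin S).
Proof.
move=> x_le lam_gt0 wf bound.
have incentive_le t (tT : (t <= T)%N) (i : 'I_N) (S : {set 'I_N}) :
    data_incentive x lam avail local server i t S <= bound.
  exact (data_incentive_le i S (wf t tT) x_le lam_gt0).
split=> // t tT cost i cost_gt S.
exact: pf_outcome_excludes (incentive_le t tT i) cost_gt.
Qed.
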